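(* The set of non-zero normal elements of $A$ (elements $u\neq0$ with $uA=Au$) is exactly $\{\lambda x^i:\lambda\in\Bbbk^\times,\ i\geq0\}$.
   Context: Let $\Bbbk$ be a field of characteristic zero and $N\geq1$ an integer. Let $A=A_N$ be the $\Bbbk$-algebra generated by $x,y$ subject to the relation $yx-xy=x^N$. *)

From HB Require Import structures.
From mathcomp Require Import all_boot all_order all_algebra.
Set Implicit Arguments. Unset Strict Implicit. Unset Printing Implicit Defensive.
Import GRing.Theory.
Local Open Scope ring_scope.

Definition AN_rel (F : fieldType) (N : nat) (B : algType F) (a b : B) : Prop :=
  b * a - a * b = a ^+ N.

(* (A, x, y) is "the F-algebra generated by x, y subject to yx - xy = x^N",
   characterised by its universal property: x, y satisfy the relation, and
   for every F-algebra B with elements a, b satisfying the relation there is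
   a unique F-algebra morphism A -> B sending x to a and y to b. *)
Definition is_AN (F : fieldType) (N : nat) (A : algType F) (x y : A) : Prop :=
  AN_rel N x y /\
  forall (B : algType F) (a b : B), AN_rel N a b ->
    (exists f : {lrmorphism A -> B}, f x = a /\ f y = b) /\
    (forall f g : {lrmorphism A -> B}, f x = g x -> f y = g y -> f =1 g).

Definition normal_elt (R : nzRingType) (u : R) : Prop :=
  (forall a : R, exists b : R, u * a = b * u) /\
  (forall a : R, exists b : R, a * u = u * b).

(* x is normal: x y = (y - x^(N-1)) x and y x = x (y + x^(N-1)), so xA = Ax, and
   normal elements are closed under products and scalars.  Conversely, A is spanned
   by the p(x) y^j, and x |-> Y, y |-> Y^(N-1) t is a faithful representation of A in
   the Ore extension of F[t] by the shift t |-> t+1 (faithful because, in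
   characteristic 0, polynomials in t are determined by their values on N).  For a
   normal u with image U, u x = b u and u y = b' u give U Y = B U and
   U Y^(N-1) t = B' U.  Top coefficients of the first equation force B = Y + b0, and
   then b0 = 0 and the coefficients of U are shift invariant, i.e. constant; top and
   bottom coefficients of the second equation then force U = c Y^i, so u = c x^i. *)

From HB Require Import structures.
From mathcomp Require Import all_boot all_order all_algebra.
From mathcomp Require Import boolp zify.
Set Implicit Arguments. Unset Strict Implicit. Unset Printing Implicit Defensive.
Import GRing.Theory.
Local Open Scope ring_scope.

Section StableEndomorphisms.
Variables (F : fieldType) (A : algType F).

Record unital_subspace := UnitalSubspace {
  usub_mem :> A -> Prop;
  usub1 : usub_mem 1;
  usubD : forall u v, usub_mem u -> usub_mem v -> usub_mem (u + v);
  usubZ : forall (c : F) u, usub_mem u -> usub_mem (c *: u) }.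

Variable W : unital_subspace.

Lemma usub0 : W 0.
Proof. by rewrite -(scale0r 1); apply/usubZ/usub1. Qed.

Lemma usubN u : W u -> W (- u).
Proof. by move=> Wu; rewrite -scaleN1r; apply: usubZ. Qed.

Record stabEnd := StabEnd {
  stab_fun :> A -> A;
  stab_funP : forall (c : F) u v, stab_fun (c *: u + v) = c *: stab_fun u + stab_fun v;
  stab_fun_stable : forall u, W u -> W (stab_fun u) }.

Lemma stabEnd_ext (f g : stabEnd) : f =1 g -> f = g.
Proof.
case: f g => f fP fW [g gP gW] /= /funext efg; subst g.
by rewrite (Prop_irrelevance fP gP) (Prop_irrelevance fW gW).
Qed.

HB.instance Definition _ := gen_eqMixin stabEnd.
HB.instance Definition _ := gen_choiceMixin stabEnd.

Lemma stab_funD (f : stabEnd) u v : f (u + v) = f u + f v.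
Proof. by have := stab_funP f 1 u v; rewrite !scale1r. Qed.

Lemma stab_fun0 (f : stabEnd) : f 0 = 0.
Proof. by apply: (addIr (f 0)); rewrite -stab_funD addr0 add0r. Qed.

Lemma stab_funZ (f : stabEnd) c u : f (c *: u) = c *: f u.
Proof. by rewrite -[c *: u]addr0 stab_funP stab_fun0 addr0. Qed.

Program Definition stab_zero : stabEnd := @StabEnd (fun _ => 0) _ _.
Next Obligation. by rewrite scaler0 addr0. Qed.
Next Obligation. exact: usub0. Qed.
Program Definition stab_opp (f : stabEnd) : stabEnd := @StabEnd (fun v => - f v) _ _.
Next Obligation. by rewrite stab_funP opprD scalerN. Qed.
Next Obligation. exact/usubN/stab_fun_stable. Qed.
Program Definition stab_add (f g : stabEnd) : stabEnd :=
  @StabEnd (fun v => f v + g v) _ _.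
Next Obligation. by rewrite !stab_funP scalerDr addrACA. Qed.
Next Obligation. by apply: usubD; apply: stab_fun_stable. Qed.
Program Definition stab_comp (f g : stabEnd) : stabEnd := @StabEnd (fun v => f (g v)) _ _.
Next Obligation. by rewrite !stab_funP. Qed.
Next Obligation. by do 2 apply: stab_fun_stable. Qed.
Program Definition stab_id : stabEnd := @StabEnd id _ _.
Program Definition stab_scale (c : F) (f : stabEnd) : stabEnd :=
  @StabEnd (fun v => c *: f v) _ _.
Next Obligation. by rewrite stab_funP scalerDr !scalerA mulrC. Qed.
Next Obligation. exact/usubZ/stab_fun_stable. Qed.

Lemma stab_addA : associative stab_add.
Proof. by move=> f g h; apply: stabEnd_ext => v /=; rewrite addrA. Qed.
Lemma stab_addC : commutative stab_add.
Proof. by move=> f g; apply: stabEnd_ext => v /=; rewrite addrC. Qed.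
Lemma stab_add0 : left_id stab_zero stab_add.
Proof. by move=> f; apply: stabEnd_ext => v /=; rewrite add0r. Qed.
Lemma stab_addN : left_inverse stab_zero stab_opp stab_add.
Proof. by move=> f; apply: stabEnd_ext => v /=; rewrite addNr. Qed.

HB.instance Definition _ :=
  GRing.isZmodule.Build stabEnd stab_addA stab_addC stab_add0 stab_addN.

Lemma stab_compA : associative stab_comp.
Proof. by move=> f g h; apply: stabEnd_ext. Qed.
Lemma stab_comp1 : left_id stab_id stab_comp.
Proof. by move=> f; apply: stabEnd_ext. Qed.
Lemma stab_compr1 : right_id stab_id stab_comp.
Proof. by move=> f; apply: stabEnd_ext. Qed.
Lemma stab_compDl : left_distributive stab_comp +%R.
Proof. by move=> f g h; apply: stabEnd_ext. Qed.
Lemma stab_compDr : right_distributive stab_comp +%R.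
Proof. by move=> f g h; apply: stabEnd_ext => v /=; rewrite stab_funD. Qed.
Lemma stab_id_neq0 : stab_id != 0.
Proof. by apply/eqP => /(congr1 (fun f : stabEnd => f 1)) /eqP; rewrite oner_eq0. Qed.

HB.instance Definition _ := GRing.Zmodule_isNzRing.Build stabEnd
  stab_compA stab_comp1 stab_compr1 stab_compDl stab_compDr stab_id_neq0.

Lemma stab_scaleA a b (f : stabEnd) :
  stab_scale a (stab_scale b f) = stab_scale (a * b) f.
Proof. by apply: stabEnd_ext => v /=; rewrite scalerA. Qed.
Lemma stab_scale1 : left_id 1 stab_scale.
Proof. by move=> f; apply: stabEnd_ext => v /=; rewrite scale1r. Qed.
Lemma stab_scaleDr : right_distributive stab_scale +%R.
Proof. by move=> a f g; apply: stabEnd_ext => v /=; rewrite scalerDr. Qed.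
Lemma stab_scaleDl (f : stabEnd) : {morph stab_scale^~ f : a b / a + b}.
Proof. by move=> a b; apply: stabEnd_ext => v /=; rewrite scalerDl. Qed.

HB.instance Definition _ := GRing.Zmodule_isLmodule.Build F stabEnd
  stab_scaleA stab_scale1 stab_scaleDr stab_scaleDl.

Lemma stab_scaleAl a (f g : stabEnd) : a *: (f * g) = (a *: f) * g.
Proof. by apply: stabEnd_ext. Qed.
HB.instance Definition _ := GRing.Lmodule_isLalgebra.Build F stabEnd stab_scaleAl.
Lemma stab_scaleAr a (f g : stabEnd) : a *: (f * g) = f * (a *: g).
Proof. by apply: stabEnd_ext => v /=; rewrite stab_funZ. Qed.
HB.instance Definition _ := GRing.Lalgebra_isAlgebra.Build F stabEnd stab_scaleAr.

Lemma stab_funM (f g : stabEnd) v : (f * g) v = f (g v). Proof. by []. Qed.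

Program Definition stab_lmul (a : A) (Wa : forall v, W v -> W (a * v)) : stabEnd :=
  @StabEnd (fun v => a * v) _ Wa.
Next Obligation. by rewrite mulrDr scalerAr. Qed.

Lemma stab_lmulX a (Wa : forall v, W v -> W (a * v)) n v :
  (stab_lmul Wa ^+ n) v = a ^+ n * v.
Proof.
elim: n => [|n IH]; first by rewrite expr0 mul1r.
by rewrite exprS stab_funM IH /= exprS mulrA.
Qed.

Lemma AN_rel_stab_lmul N x y (Wx : forall v, W v -> W (x * v))
    (Wy : forall v, W v -> W (y * v)) :
  AN_rel N x y -> AN_rel N (@stab_lmul x Wx) (@stab_lmul y Wy).
Proof.
move=> Hr; apply: stabEnd_ext => v.
by rewrite stab_lmulX /= !mulrA -mulrBl Hr.
Qed.

End StableEndomorphisms.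

Section Generation.
Variables (F : fieldType) (A : algType F).

Program Definition usubT : unital_subspace A := @UnitalSubspace F A (fun _ => True) _ _ _.

Definition lmul_endo (a : A) : stabEnd usubT := @stab_lmul _ _ usubT a (fun _ _ => I).

Lemma lmul_endo_is_multiplicative : multiplicative lmul_endo.
Proof. by split=> [a b|]; apply: stabEnd_ext => v //=; rewrite ?mulrA ?mul1r. Qed.
Lemma lmul_endo_is_linear : linear lmul_endo.
Proof. by move=> c a b; apply: stabEnd_ext => v /=; rewrite mulrDl scalerAl. Qed.
HB.instance Definition _ :=
  GRing.isLinear.Build F A (stabEnd usubT) _ lmul_endo lmul_endo_is_linear.
HB.instance Definition _ :=
  GRing.isMultiplicative.Build A (stabEnd usubT) lmul_endo lmul_endo_is_multiplicative.

Program Definition stab_forget (W : unital_subspace A) (f : stabEnd W) : stabEnd usubT :=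
  @StabEnd F A usubT f (@stab_funP F A W f) _.

Section Forget.
Variables (W : unital_subspace A) (psi : {lrmorphism A -> stabEnd W}).

Definition forget_rep (a : A) := stab_forget (psi a).

Lemma forget_rep_is_multiplicative : multiplicative forget_rep.
Proof. by split=> [a b|]; apply: stabEnd_ext => v //=; rewrite ?rmorphM ?rmorph1. Qed.
Lemma forget_rep_is_linear : linear forget_rep.
Proof. by move=> c a b; apply: stabEnd_ext => v /=; rewrite linearP. Qed.
HB.instance Definition _ :=
  GRing.isLinear.Build F A (stabEnd usubT) _ forget_rep forget_rep_is_linear.
HB.instance Definition _ :=
  GRing.isMultiplicative.Build A (stabEnd usubT) forget_rep forget_rep_is_multiplicative.

End Forget.

(* psi : A -> End(W) extends x, y |-> left multiplication; viewed in End(A) it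
   agrees with lmul_endo on x and y, hence everywhere, so a = psi a 1 lies in W. *)
Lemma is_AN_usub_full N (x y : A) (W : unital_subspace A) : is_AN N x y ->
  (forall v, W v -> W (x * v)) -> (forall v, W v -> W (y * v)) -> forall a, W a.
Proof.
move=> [Hr Hu] Wx Wy a.
have [[psi [psix psiy]] _] := Hu _ _ _ (AN_rel_stab_lmul Wx Wy Hr).
have [_ lmul_uniq] :=
  Hu _ _ _ (@AN_rel_stab_lmul _ _ usubT _ _ _ (fun _ _ => I) (fun _ _ => I) Hr).
have lmul_psi : lmul_endo a = forget_rep psi a.
  by apply: lmul_uniq; apply: stabEnd_ext => v /=; rewrite ?psix ?psiy.
have := congr1 (fun f : stabEnd usubT => f 1) lmul_psi; rewrite /= mulr1 => ->.
exact/stab_fun_stable/usub1.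
Qed.

End Generation.

Section Spanning.
Variables (F : fieldType) (A : algType F) (N : nat) (x y : A).

Local Notation hx := (horner_alg x).

Definition xN_deriv (p : {poly F}) : {poly F} := 'X^N * p^`().

Definition pbw (C : {poly {poly F}}) : A := \sum_(j < size C) hx C`_j * y ^+ j.

Lemma pbw_widen n (C : {poly {poly F}}) :
  (size C <= n)%N -> pbw C = \sum_(j < n) hx C`_j * y ^+ j.
Proof.
move=> le; rewrite /pbw (big_ord_widen n (fun j => hx C`_j * y ^+ j)) // big_mkcond.
apply: eq_bigr => i _; case: ltnP => // H.
by rewrite nth_default // rmorph0 mul0r.
Qed.

Lemma pbw0 : pbw 0 = 0.
Proof. by rewrite /pbw size_poly0 big_ord0. Qed.

Lemma pbw1 : pbw 1 = 1.
Proof. by rewrite /pbw size_poly1 big_ord1 coef1 /= rmorph1 mulr1. Qed.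

Lemma pbwD C D : pbw (C + D) = pbw C + pbw D.
Proof.
set n := maxn (size C) (size D).
rewrite (@pbw_widen n (C + D)); last by rewrite (leq_trans (size_polyD _ _)).
rewrite (@pbw_widen n C) ?leq_maxl // (@pbw_widen n D) ?leq_maxr // -big_split /=.
by apply: eq_bigr => i _; rewrite coefD rmorphD mulrDl.
Qed.

Lemma pbwZ c C : pbw (c%:P *: C) = c *: pbw C.
Proof.
rewrite (@pbw_widen (size C)) ?size_scale_leq // /pbw scaler_sumr.
apply: eq_bigr => i _; rewrite coefZ rmorphM /= horner_algC.
by rewrite -scalerAl mul1r scalerAl.
Qed.

Lemma mul_x_pbw C : x * pbw C = pbw ('X *: C).
Proof.
rewrite (@pbw_widen (size C) ('X *: C)) ?size_scale_leq // /pbw mulr_sumr.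
by apply: eq_bigr => i _; rewrite coefZ rmorphM /= horner_algX mulrA.
Qed.

Hypothesis Hr : AN_rel N x y.

Lemma AN_comm : y * x = x * y + x ^+ N.
Proof. by rewrite -Hr addrC subrK. Qed.

Lemma horner_alg_commX p n : hx p * x ^+ n = x ^+ n * hx p.
Proof.
have -> : x ^+ n = hx 'X^n by rewrite rmorphXn /= horner_algX.
by rewrite -!rmorphM mulrC.
Qed.

Lemma AN_comm_horner p : y * hx p = hx p * y + hx (xN_deriv p).
Proof.
rewrite /xN_deriv; elim/poly_ind: p => [|p c IH].
  by rewrite deriv0 mulr0 !rmorph0 mulr0 mul0r addr0.
rewrite derivMXaddC !rmorphD !rmorphM /= horner_algC rmorphXn /= !horner_algX.
move: IH; rewrite rmorphM rmorphXn /= horner_algX => IH.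
rewrite mulrDr mulrA IH mulrDl -mulrA AN_comm mulrDr.
have -> : y * c%:A = c%:A * y by rewrite -scalerAr -scalerAl mulr1 mul1r.
rewrite rmorphD rmorphM /= horner_algX mulrDl mulrDr !mulrA horner_alg_commX.
by rewrite -!addrA; congr (_ + _); rewrite addrA addrC.
Qed.

Lemma mul_y_pbw C :
  y * pbw C = pbw (C * 'X) + pbw (\poly_(j < size C) xN_deriv C`_j).
Proof.
rewrite (@pbw_widen (size C) (\poly_(j < size C) _)) ?size_poly //.
rewrite (@pbw_widen (size C).+1 (C * 'X)); last first.
  by rewrite (leq_trans (size_polyMleq _ _)) // size_polyX addnS addn1.
rewrite big_ord_recl coefMX eqxx rmorph0 mul0r add0r /pbw mulr_sumr -big_split /=.
apply: eq_bigr => i _; rewrite coefMX coef_poly ltn_ord /= mulrA AN_comm_horner.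
by rewrite mulrDl -mulrA -exprS.
Qed.

End Spanning.

Local Obligation Tactic := idtac.

Program Definition pbw_span (F : fieldType) (A : algType F) (x y : A) :
  unital_subspace A := @UnitalSubspace F A (fun a => exists C, a = pbw x y C) _ _ _.
Next Obligation. by move=> F A x y; exists 1; rewrite pbw1. Qed.
Next Obligation. by move=> F A x y _ _ [C ->] [D ->]; exists (C + D); rewrite pbwD. Qed.
Next Obligation. by move=> F A x y c _ [C ->]; exists (c%:P *: C); rewrite pbwZ. Qed.

Lemma pbw_surj (F : fieldType) (A : algType F) (N : nat) (x y : A) :
  is_AN N x y -> forall a, exists C, a = pbw x y C.
Proof.
move=> HA; apply: (@is_AN_usub_full F A N x y (pbw_span x y) HA).
  by move=> _ [C ->]; exists ('X *: C); rewrite mul_x_pbw.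
move=> _ [C ->]; exists (C * 'X + \poly_(j < size C) xN_deriv N C`_j).
by rewrite pbwD -mul_y_pbw //; case: HA.
Qed.

Section Shift.
Variable F : fieldType.

Definition shiftp (r : nat) (p : {poly F}) := p \Po ('X + r%:R%:P).

Lemma shiftpD r p q : shiftp r (p + q) = shiftp r p + shiftp r q.
Proof. by rewrite /shiftp comp_polyD. Qed.
Lemma shiftpC r (c : F) : shiftp r c%:P = c%:P.
Proof. by rewrite /shiftp comp_polyC. Qed.
Lemma shiftp0 r : shiftp r 0 = 0.
Proof. by rewrite /shiftp comp_poly0. Qed.
Lemma size_shiftp r p : size (shiftp r p) = size p.
Proof. by rewrite /shiftp size_comp_poly2 // size_XaddC. Qed.
Lemma shiftp_eq0 r p : (shiftp r p == 0) = (p == 0).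
Proof. by rewrite -!size_poly_eq0 size_shiftp. Qed.
Lemma lead_coef_shiftp r p : lead_coef (shiftp r p) = lead_coef p.
Proof.
by rewrite /shiftp lead_coef_comp ?size_XaddC // lead_coefXaddC expr1n mulr1.
Qed.
Lemma horner_shiftp r p (z : F) : (shiftp r p).[z] = p.[z + r%:R].
Proof. by rewrite /shiftp horner_comp !hornerE. Qed.
End Shift.

Section SkewPolynomials.
Variable F : fieldType.
Local Notation skewpoly := {poly {poly F}}.

(* U : {poly {poly F}} stands for sum_s Y^s U_s(t) in the Ore extension of F[t]
   with p(t) Y = Y p(t+1), so that (Y^s a)(Y^r b) = Y^(s+r) a(t+r) b. *)
Definition skew_mul (U V : skewpoly) : skewpoly :=
  \poly_(m < size U + size V) \sum_(r < m.+1) shiftp r U`_(m - r) * V`_r.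

Lemma coef_skew_mul U V m :
  (skew_mul U V)`_m = \sum_(r < m.+1) shiftp r U`_(m - r) * V`_r.
Proof.
rewrite coef_poly; case: ltnP => // Hm; apply/esym/big1 => r _.
have [Hr|Hr] := ltnP r (size V); last by rewrite (nth_default _ Hr) mulr0.
rewrite nth_default ?shiftp0 ?mul0r //.
by move: (ltn_ord r) Hm Hr; move: (size U) (size V) (r : nat) => a b k; lia.
Qed.

(* The action on F^n where t e_j = j e_j and Y e_j = e_(j+1) (truncated). *)
Definition skew_mx n (U : skewpoly) : 'M[F]_n :=
  \matrix_(i, j) if (j <= i)%N then (U`_(i - j)).[j%:R] else 0.

Lemma skew_mxM n U V : skew_mx n (skew_mul U V) = skew_mx n U *m skew_mx n V.
Proof.
apply/matrixP => i j; rewrite !mxE coef_skew_mul.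
pose f l := (if (l <= i)%N then (U`_(i - l)).[l%:R] else 0) *
            (if (j <= l)%N then (V`_(l - j)).[j%:R] else 0).
rewrite (eq_bigr (fun l : 'I_n => f l)); last by move=> l _; rewrite !mxE.
have [ji|ij] := leqP j i; last first.
  rewrite big1 // => l _; rewrite /f.
  by case: (leqP l i) => li; case: (leqP j l) => jl; rewrite ?mul0r ?mulr0 //; lia.
rewrite horner_sum -(big_mkord xpredT f).
rewrite (@big_cat_nat _ _ _ j 0 n) //=; last by rewrite (leq_trans ji) // ltnW.
rewrite [X in _ = X + _]big1_seq ?add0r; last first.
  move=> l /andP [_]; rewrite mem_index_iota /f => /andP [_ lj].
  by rewrite (leqNgt j l) lj mulr0.
rewrite (@big_cat_nat _ _ _ i.+1 j n) //=; last by rewrite ltnW.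
rewrite [X in _ = _ + X]big1_seq ?addr0; last first.
  move=> l /andP [_]; rewrite mem_index_iota /f => /andP [il _].
  by rewrite (leqNgt l i) il mul0r.
rewrite (big_addn 0 _ j) subSn // big_mkord; apply: eq_bigr => r _.
have rji : (r + j <= i)%N by move: (ltn_ord r); lia.
rewrite /f leq_addl addnK rji hornerM horner_shiftp -natrD.
by rewrite subnDA addnC subnAC.
Qed.

Lemma skew_mxD n U V : skew_mx n (U + V) = skew_mx n U + skew_mx n V.
Proof.
by apply/matrixP => i j; rewrite !mxE coefD hornerD; case: ifP; rewrite ?addr0.
Qed.

Lemma skew_mxZ n (c : F) U : skew_mx n (c%:P *: U) = c *: skew_mx n U.
Proof.
by apply/matrixP => i j; rewrite !mxE coefZ hornerM hornerC; case: ifP; rewrite ?mulr0.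
Qed.

Lemma skew_mxB n U V : skew_mx n (U - V) = skew_mx n U - skew_mx n V.
Proof.
have -> : - V = (-1)%:P *: V by rewrite polyCN polyC1 scaleN1r.
by rewrite skew_mxD skew_mxZ scaleN1r.
Qed.

Lemma skew_mx1 n : skew_mx n 1 = 1.
Proof.
apply/matrixP => i j; rewrite !mxE coef1 subn_eq0.
case: (leqP j i) => ji; last by case: eqP => // ij; move: ji; rewrite ij ltnn.
rewrite [(i <= j)%N]leq_eqVlt ltnNge ji orbF.
by rewrite -polyC_natr hornerC.
Qed.

Lemma skew_mul_const (p : {poly F}) V :
  skew_mul (map_poly polyC p) V = map_poly polyC p * V.
Proof.
apply/polyP => m; rewrite coef_skew_mul coefMr; apply: eq_bigr => r _.
by rewrite coef_map /= shiftpC.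
Qed.

Lemma skew_mulDl U1 U2 V : skew_mul (U1 + U2) V = skew_mul U1 V + skew_mul U2 V.
Proof.
apply/polyP => m; rewrite coefD !coef_skew_mul -big_split /=.
by apply: eq_bigr => r _; rewrite coefD shiftpD mulrDl.
Qed.

Lemma skew_mul0l V : skew_mul 0 V = 0.
Proof.
apply/polyP => m; rewrite coef_skew_mul coef0 big1 // => r _.
by rewrite coef0 shiftp0 mul0r.
Qed.

Lemma coef_skew_mulCl (b : {poly F}) U m : (skew_mul b%:P U)`_m = shiftp m b * U`_m.
Proof.
rewrite coef_skew_mul (bigD1 ord_max) //= subnn coefC eqxx big1 ?addr0 // => i ne.
rewrite coefC; case: eqP => e; last by rewrite shiftp0 mul0r.
by case/eqP: ne; apply: val_inj => /=; move: (ltn_ord i) e; lia.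
Qed.

Lemma coef_skew_mulXnr U (b : {poly F}) r m :
  (skew_mul U (b *: 'X^r))`_m = if (r <= m)%N then shiftp r U`_(m - r) * b else 0.
Proof.
rewrite coef_skew_mul; case: leqP => rm.
  have rm' : (r < m.+1)%N by [].
  rewrite (bigD1 (Ordinal rm')) //= coefZ coefXn eqxx mulr1 big1 ?addr0 //.
  move=> i /eqP ne; rewrite coefZ coefXn.
  by case: eqP => e; [case: ne; apply: val_inj | rewrite !mulr0].
apply: big1 => i _; rewrite coefZ coefXn.
by case: eqP => e; [move: (ltn_ord i); lia | rewrite !mulr0].
Qed.

Lemma skew_mul_monomial (a b : {poly F}) s r :
  skew_mul (a *: 'X^s) (b *: 'X^r) = (shiftp r a * b) *: 'X^(s + r).
Proof.
apply/polyP => m; rewrite coef_skew_mulXnr !coefZ !coefXn.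
case: leqP => rm.
  have -> : (m - r == s)%N = (m == s + r)%N by apply/eqP/eqP; lia.
  by case: eqP; rewrite ?mulr1 ?mulr0 ?shiftp0 ?mul0r.
by case: eqP => [e|_]; [move: rm; lia | rewrite mulr0].
Qed.

Lemma skew_mul_bottom (U V : skewpoly) a b :
  (forall i, (i < a)%N -> U`_i = 0) -> (forall i, (i < b)%N -> V`_i = 0) ->
  (forall m, (m < a + b)%N -> (skew_mul U V)`_m = 0) /\
  (skew_mul U V)`_(a + b) = shiftp b U`_a * V`_b.
Proof.
move=> HU HV; split.
  move=> m mab; rewrite coef_skew_mul big1 // => r _.
  case: (ltnP r b) => rb; first by rewrite HV // mulr0.
  by rewrite HU ?shiftp0 ?mul0r //; move: (ltn_ord r); lia.
have bab : (b < (a + b).+1)%N by rewrite ltnS leq_addl.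
rewrite coef_skew_mul (bigD1 (Ordinal bab)) //= addnK big1 ?addr0 // => r ne.
case: (ltnP r b) => rb; first by rewrite HV // mulr0.
rewrite HU ?shiftp0 ?mul0r //.
have : (r : nat) != b by apply: contra ne => /eqP e; apply/eqP/val_inj.
by move: (ltn_ord r) rb; lia.
Qed.

Lemma size_poly_top (R : nzRingType) (p : {poly R}) k :
  (forall m, (k < m)%N -> p`_m = 0) -> p`_k != 0 -> size p = k.+1.
Proof.
move=> above pk; apply/eqP; rewrite eqn_leq; apply/andP; split.
  by apply/leq_sizeP => m; apply: above.
by rewrite ltnNge; apply: contra pk => /leq_sizeP/(_ k (leqnn k)) ->.
Qed.

Lemma skew_mul_top (U V : skewpoly) : U != 0 -> V != 0 ->
  size (skew_mul U V) = (size U + size V).-1 /\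
  lead_coef (skew_mul U V) = shiftp (size V).-1 (lead_coef U) * lead_coef V.
Proof.
move=> U0 V0; rewrite !lead_coefE.
have [a sU] : exists a, size U = a.+1 by exists (size U).-1; rewrite prednK ?size_poly_gt0.
have [b sV] : exists b, size V = b.+1 by exists (size V).-1; rewrite prednK ?size_poly_gt0.
have Ua : U`_a != 0 by move: U0; rewrite -lead_coef_eq0 lead_coefE sU.
have Vb : V`_b != 0 by move: V0; rewrite -lead_coef_eq0 lead_coefE sV.
have U_above i : (a < i)%N -> U`_i = 0 by move=> ai; rewrite nth_default // sU.
have V_above i : (b < i)%N -> V`_i = 0 by move=> bi; rewrite nth_default // sV.
have top_coef : (skew_mul U V)`_(a + b) = shiftp b U`_a * V`_b.
  have bab : (b < (a + b).+1)%N by rewrite ltnS leq_addl.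
  rewrite coef_skew_mul (bigD1 (Ordinal bab)) //= addnK big1 ?addr0 // => r ne.
  have rb : (r : nat) != b by apply: contra ne => /eqP e; apply/eqP/val_inj.
  case: (ltnP b r) => br; first by rewrite V_above ?mulr0.
  by rewrite U_above ?shiftp0 ?mul0r //; move: (ltn_ord r) rb br; lia.
have sz : size (skew_mul U V) = (a + b).+1.
  apply: size_poly_top => [m abm|]; last by rewrite top_coef mulf_neq0 ?shiftp_eq0.
  rewrite coef_skew_mul big1 // => r _.
  case: (ltnP b r) => br; first by rewrite V_above ?mulr0.
  by rewrite U_above ?shiftp0 ?mul0r //; move: (ltn_ord r) br; lia.
by rewrite sz sU sV addSn addnS /= top_coef.
Qed.

End SkewPolynomials.

Section CharZero.
Variable F : fieldType.
Hypothesis char0 : [pchar F] =i pred0.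
Local Notation skewpoly := {poly {poly F}}.

Lemma natr_inj_pchar0 : injective (fun n : nat => n%:R : F).
Proof.
move=> a b /= /eqP; have natf0 := iffLR (pcharf0P F) char0.
wlog ab : a b / (a <= b)%N.
  by move=> W; case: (leqP a b) => [|/ltnW] ab; [apply: W | rewrite eq_sym => /W ->].
by rewrite eq_sym -subr_eq0 -natrB // natf0 subn_eq0 => ba; apply/eqP; rewrite eqn_leq ab.
Qed.

Lemma poly_natr_eq0 (p : {poly F}) : (forall k : nat, p.[k%:R] = 0) -> p = 0.
Proof.
move=> p_nat0; apply/eqP; apply: contraT => p0.
have := max_poly_roots p0 (rs := [seq k%:R | k <- iota 0 (size p)]).
rewrite size_map size_iota ltnn; apply.
  by apply/allP => z /mapP [k _ ->]; apply/rootP.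
by rewrite map_inj_uniq ?iota_uniq //; apply: natr_inj_pchar0.
Qed.

Lemma skew_mx_inj (U V : skewpoly) : (forall n, skew_mx n.+1 U = skew_mx n.+1 V) -> U = V.
Proof.
move=> eqUV; apply/polyP => s; apply/eqP; rewrite -subr_eq0; apply/eqP.
apply: poly_natr_eq0 => k.
have := congr1 (fun M : 'M[F]_((k + s).+1) => M (inord (k + s)) (inord k))
  (eqUV (k + s)%N).
rewrite !mxE !inordK ?ltnS ?leq_addr // addKn => Ek.
by rewrite hornerD hornerN Ek subrr.
Qed.

Lemma shiftp1_fixed (p : {poly F}) : shiftp 1 p = p -> p = (p.[0])%:P.
Proof.
move=> Hp; apply/eqP; rewrite -subr_eq0; apply/eqP; apply: poly_natr_eq0 => k.
rewrite hornerD hornerN hornerC; apply/eqP; rewrite subr_eq0; apply/eqP.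
by elim: k => // k IH; rewrite -IH -{2}Hp horner_shiftp -natrD addn1.
Qed.

End CharZero.

Lemma lowest_coef_exists (R : nzRingType) (p : {poly R}) :
  p != 0 -> exists2 k, p`_k != 0 & forall i, (i < k)%N -> p`_i = 0.
Proof.
move=> p0; have [|k pk kmin] := @ex_minnP (fun m => p`_m != 0).
  by exists (size p).-1; rewrite -lead_coefE lead_coef_eq0.
exists k => // i ik; apply/eqP; apply: contraTT ik => pi.
by rewrite -leqNgt; apply: kmin.
Qed.

Lemma lowest_coef_unique (R : nzRingType) (p : {poly R}) i j :
  p`_i != 0 -> (forall k, (k < i)%N -> p`_k = 0) ->
  p`_j != 0 -> (forall k, (k < j)%N -> p`_k = 0) -> i = j.
Proof.
move=> pi ilow pj jlow; case: (ltngtP i j) => // [ij|ji].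
  by move: pi; rewrite jlow ?eqxx.
by move: pj; rewrite ilow ?eqxx.
Qed.

Section SkewNormalizer.
Variable F : fieldType.
Hypothesis char0 : [pchar F] =i pred0.
Local Notation skewpoly := {poly {poly F}}.

Lemma shiftp_eqX_inj (p : {poly F}) r s : shiftp r p = 'X -> shiftp s p = 'X -> r = s.
Proof.
move=> /(congr1 (horner^~ s%:R)) + /(congr1 (horner^~ r%:R)).
rewrite !horner_shiftp !hornerX addrC => -> /esym.
exact: natr_inj_pchar0.
Qed.

Lemma coef_skew_mulXr (U : skewpoly) m :
  (skew_mul U 'X)`_m = if m is m'.+1 then shiftp 1 U`_m' else 0.
Proof.
have -> : ('X : skewpoly) = 1 *: 'X^1 by rewrite scale1r expr1.
by rewrite coef_skew_mulXnr mulr1; case: m => //= m; rewrite subn1.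
Qed.

Lemma skew_commute_X_shape (U B : skewpoly) : U != 0 ->
  skew_mul U 'X = skew_mul B U -> exists b0, B = b0%:P + 'X.
Proof.
move=> U0 UXBU.
have X0 : ('X : skewpoly) != 0 by rewrite polyX_eq0.
have B0 : B != 0.
  apply: contra_eqN UXBU => /eqP ->; rewrite skew_mul0l -size_poly_eq0.
  by have [-> _] := skew_mul_top U0 X0; rewrite size_polyX addn2.
have [sUX lUX] := skew_mul_top U0 X0; have [sBU lBU] := skew_mul_top B0 U0.
rewrite UXBU sBU lBU size_polyX lead_coefX mulr1 in sUX lUX.
have sB : size B = 2%N.
  by move: (size_poly_gt0 U) sUX; rewrite U0; lia.
set L := lead_coef B in lUX; set lU := lead_coef U in lUX.
have lU0 : lU != 0 by rewrite lead_coef_eq0.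
have sL : size L = 1%N.
  move: (congr1 (fun p : {poly F} => size p) lUX).
  rewrite size_mul ?shiftp_eq0 ?lead_coef_eq0 // !size_shiftp.
  move: (size_poly_gt0 lU) (size_poly_gt0 L); rewrite lU0 lead_coef_eq0 B0.
  by move: (size lU) (size L) => u l; lia.
have [l EL] : exists l, L = l%:P by exists L`_0; apply: size1_polyC; rewrite sL.
have l1 : l = 1.
  move: (congr1 lead_coef lUX); rewrite lead_coefM EL shiftpC lead_coefC lead_coef_shiftp.
  by rewrite -{2}[lead_coef lU]mul1r => /mulIf -> //; rewrite lead_coef_eq0.
exists B`_0; apply/polyP => i; rewrite coefD coefC coefX.
case: i => [|[|i]] /=; first by rewrite addr0.
  by move: EL; rewrite l1 /L lead_coefE sB add0r polyC1.
by rewrite addr0 nth_default // sB.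
Qed.

Lemma skew_commute_X_const (U B : skewpoly) : U != 0 ->
  skew_mul U 'X = skew_mul B U -> forall m, U`_m = (U`_m).[0]%:P.
Proof.
move=> U0 UXBU; have [b0 EB] := skew_commute_X_shape U0 UXBU.
have coefBU m :
    (skew_mul U 'X)`_m = shiftp m b0 * U`_m + (if m is m'.+1 then U`_m' else 0).
  have hX : ('X : skewpoly) = map_poly polyC 'X by rewrite map_polyX.
  rewrite UXBU EB skew_mulDl coefD coef_skew_mulCl [X in skew_mul X]hX skew_mul_const.
  by rewrite -hX coefXM; case: m.
have b00 : b0 = 0.
  apply/eqP; apply: contraNT U0 => b00; apply/eqP/polyP => m; rewrite coef0.
  have U_eq0 k : shiftp k b0 * U`_k = 0 -> U`_k = 0.
    by move/eqP; rewrite mulf_eq0 shiftp_eq0 (negPf b00) => /eqP.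
  elim: m => [|m IH]; apply: U_eq0.
    by move: (coefBU 0%N); rewrite coef_skew_mulXr addr0.
  by move: (coefBU m.+1); rewrite coef_skew_mulXr IH shiftp0 addr0.
move=> m; apply: (shiftp1_fixed char0).
by move: (coefBU m.+1); rewrite coef_skew_mulXr b00 shiftp0 mul0r add0r.
Qed.

Lemma coef_skew_mul_tXnr (U : skewpoly) n m : (forall k, U`_k = (U`_k).[0]%:P) ->
  (skew_mul U ('X *: 'X^n))`_m = if (n <= m)%N then U`_(m - n) * 'X else 0.
Proof. by move=> Uconst; rewrite coef_skew_mulXnr Uconst shiftpC -Uconst. Qed.

Section CommuteTXn.
Variables (U B : skewpoly) (n : nat).
Hypotheses (U0 : U != 0) (Uconst : forall k, U`_k = (U`_k).[0]%:P).
Hypothesis UtXBU : skew_mul U ('X *: 'X^n) = skew_mul B U.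

Lemma skew_commute_tXn_top : size B = n.+1 /\ shiftp (size U).-1 (lead_coef B) = 'X.
Proof.
have tX0 : ('X *: 'X^n : skewpoly) != 0.
  by rewrite -size_poly_eq0 size_scale ?polyX_eq0 // size_polyXn.
have [sUt lUt] := skew_mul_top U0 tX0.
rewrite size_scale ?polyX_eq0 // size_polyXn lead_coefZ lead_coefXn mulr1 in sUt lUt.
have B0 : B != 0.
  apply: contra_eqN UtXBU => /eqP ->; rewrite skew_mul0l -size_poly_eq0 sUt.
  by rewrite addnS /= addn_eq0 size_poly_eq0 (negPf U0).
have [sBU lBU] := skew_mul_top B0 U0; rewrite -UtXBU in sBU lBU.
have lU0 : lead_coef U != 0 by rewrite lead_coef_eq0.
split; first by move: (size_poly_gt0 U) sBU; rewrite U0 sUt; lia.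
apply: (mulIf lU0); rewrite -lBU lUt [lead_coef U]lead_coefE Uconst shiftpC.
by rewrite mulrC.
Qed.

Lemma skew_commute_tXn_bottom k : U`_k != 0 -> (forall i, (i < k)%N -> U`_i = 0) ->
  shiftp k (lead_coef B) = 'X.
Proof.
move=> Uk Ulow; have [sB _] := skew_commute_tXn_top.
have B0 : B != 0 by rewrite -size_poly_eq0 sB.
have [r Br Blow] := lowest_coef_exists B0.
have [BUlow BUr] := skew_mul_bottom Blow Ulow.
have BUr0 : (skew_mul B U)`_(r + k) != 0 by rewrite BUr mulf_neq0 ?shiftp_eq0.
have UtX_low i : (i < k + n)%N -> (skew_mul B U)`_i = 0.
  move=> ikn; rewrite -UtXBU coef_skew_mul_tXnr //; case: leqP => // ni.
  by rewrite Ulow ?mul0r //; lia.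
have UtX_kn : (skew_mul B U)`_(k + n) != 0.
  by rewrite -UtXBU coef_skew_mul_tXnr // leq_addl addnK mulf_neq0 ?polyX_eq0.
have rn : r = n by have := lowest_coef_unique BUr0 BUlow UtX_kn UtX_low; lia.
have lB : lead_coef B = B`_r by rewrite lead_coefE sB rn.
apply: (mulIf Uk); rewrite lB -BUr mulrC -UtXBU coef_skew_mul_tXnr //.
by rewrite rn leq_addr addKn.
Qed.

Lemma skew_commute_tXn_monomial : exists (c : F) (i : nat), c != 0 /\ U = c%:P *: 'X^i.
Proof.
have [_ top] := skew_commute_tXn_top.
have [k Uk Ulow] := lowest_coef_exists U0.
have ka := shiftp_eqX_inj (skew_commute_tXn_bottom Uk Ulow) top.
exists (U`_k).[0], k; split; first by apply: contra Uk => /eqP c0; rewrite Uconst c0.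
apply/polyP => i; rewrite coefZ coefXn.
case: (ltngtP i k) => [ik|ki|->]; rewrite ?mulr0 ?mulr1 -?Uconst //; first exact: Ulow.
by rewrite nth_default // (leq_trans _ ki) // ka leqSpred.
Qed.

End CommuteTXn.

End SkewNormalizer.

Section SkewRepresentation.
Variables (F : fieldType) (N : nat) (A : algType F) (x y : A).
Local Notation skewpoly := {poly {poly F}}.

Definition skew_y : skewpoly := 'X *: 'X^(N.-1).

Lemma skew_mxXn n k : skew_mx n ('X^k : skewpoly) = skew_mx n 'X ^+ k.
Proof.
elim: k => [|k IH]; first by rewrite !expr0 skew_mx1.
rewrite [RHS]exprSr -IH -mulmxE -skew_mxM; congr skew_mx.
by rewrite -[X in skew_mul X _](map_polyXn polyC) skew_mul_const map_polyXn exprSr.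
Qed.

Hypothesis N_gt0 : (0 < N)%N.

Lemma AN_rel_skew_mx n : AN_rel N (skew_mx n.+1 'X) (skew_mx n.+1 skew_y).
Proof.
have X1 : ('X : skewpoly) = 1 *: 'X^1 by rewrite scale1r expr1.
rewrite /AN_rel -skew_mxXn -!mulmxE -!skew_mxM -skew_mxB.
rewrite [X in skew_mul _ X]X1 [X in skew_mul X skew_y]X1 !skew_mul_monomial shiftpC.
rewrite mulr1 mul1r addn1 add1n prednK // -scalerBl /shiftp comp_polyX.
by rewrite addrAC subrr add0r scale1r.
Qed.

Definition represents (a : A) (U : skewpoly) :=
  forall n (f : {lrmorphism A -> 'M[F]_n.+1}),
  f x = skew_mx n.+1 'X -> f y = skew_mx n.+1 skew_y -> f a = skew_mx n.+1 U.

Lemma represents_x : represents x 'X. Proof. by []. Qed.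
Lemma represents_y : represents y skew_y. Proof. by []. Qed.
Lemma represents0 : represents 0 0.
Proof.
move=> n f _ _; rewrite raddf0; apply/matrixP => i j.
by rewrite !mxE coef0 horner0; case: ifP.
Qed.
Lemma represents1 : represents 1 1.
Proof. by move=> n f _ _; rewrite rmorph1 skew_mx1. Qed.
Lemma representsD a b U V : represents a U -> represents b V -> represents (a + b) (U + V).
Proof.
by move=> aU bV n f fx fy; rewrite raddfD skew_mxD; congr (_ + _); [apply: aU | apply: bV].
Qed.
Lemma representsB a b U V : represents a U -> represents b V -> represents (a - b) (U - V).
Proof.
by move=> aU bV n f fx fy; rewrite raddfB skew_mxB; congr (_ - _); [apply: aU | apply: bV].
Qed.
Lemma representsZ c a U : represents a U -> represents (c *: a) (c%:P *: U).
Proof. by move=> aU n f fx fy; rewrite linearZ skew_mxZ; congr (_ *: _); apply: aU. Qed.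
Lemma representsM a b U V :
  represents a U -> represents b V -> represents (a * b) (skew_mul U V).
Proof.
move=> aU bV n f fx fy; rewrite rmorphM skew_mxM mulmxE.
by congr (_ * _); [apply: aU | apply: bV].
Qed.

Lemma represents_horner p : represents (horner_alg x p) (map_poly polyC p).
Proof.
elim/poly_ind: p => [|p c IH]; first by rewrite rmorph0 map_poly0; apply: represents0.
rewrite !rmorphD !rmorphM /= horner_algX horner_algC map_polyX map_polyC /=.
apply: representsD; last by rewrite -alg_polyC; apply/representsZ/represents1.
by rewrite -skew_mul_const; apply: representsM IH represents_x.
Qed.

Lemma represents_monomial (c : F) i : represents (c *: x ^+ i) (c%:P *: 'X^i).
Proof.
apply: representsZ; have := represents_horner 'X^i.
by rewrite rmorphXn /= horner_algX map_polyXn.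
Qed.

Fixpoint ypow_coef j : {poly F} :=
  if j is j'.+1 then shiftp N.-1 (ypow_coef j') * 'X else 1.

Lemma size_ypow_coef j : size (ypow_coef j) = j.+1.
Proof.
elim: j => [|j IH] /=; first by rewrite size_poly1.
by rewrite size_mulX ?size_shiftp ?IH // shiftp_eq0 -size_poly_eq0 IH.
Qed.

Lemma lead_coef_ypow_coef j : lead_coef (ypow_coef j) = 1.
Proof.
elim: j => [|j IH] /=; first by rewrite lead_coef1.
by rewrite lead_coefMX lead_coef_shiftp.
Qed.

Lemma represents_ypow j : represents (y ^+ j) (ypow_coef j *: 'X^(j * N.-1)).
Proof.
elim: j => [|j IH]; first by rewrite expr0 /= mul0n scale1r expr0; apply: represents1.
rewrite exprSr; have -> : ypow_coef j.+1 *: 'X^(j.+1 * N.-1) =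
    skew_mul (ypow_coef j *: 'X^(j * N.-1)) skew_y :> skewpoly.
  by rewrite /skew_y skew_mul_monomial mulSn addnC.
exact: representsM IH represents_y.
Qed.

Definition skew_pbw (C : skewpoly) : skewpoly :=
  \sum_(j < size C) map_poly polyC C`_j * (ypow_coef j *: 'X^(j * N.-1)).

Lemma represents_pbw C : represents (pbw x y C) (skew_pbw C).
Proof.
rewrite /pbw /skew_pbw; elim/big_rec2: _ => [|j a U _ aU]; first exact: represents0.
apply: representsD aU; rewrite -skew_mul_const.
exact: representsM (represents_horner _) (represents_ypow _).
Qed.

(* The t^J-coefficient of skew_pbw C only involves j = J := deg C, as ypow_coef j
   has degree j. *)
Lemma skew_pbw_eq0 C : skew_pbw C = 0 -> C = 0.
Proof.
move=> C0; apply/eqP; apply: contraT => /negPf nzC.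
set J := (size C).-1; have sC : size C = J.+1 by rewrite prednK // size_poly_gt0 nzC.
have lead0 s : (C`_J * 'X^(J * N.-1))`_s = 0.
  move: (congr1 (fun W : skewpoly => (W`_s)`_J) C0); rewrite coef0 coef0 /skew_pbw.
  rewrite coef_sum coef_sum (eq_bigr (fun j : 'I_(size C) =>
      (ypow_coef j)`_J * (C`_j * 'X^(j * N.-1))`_s)); last first.
    move=> j _; rewrite -scalerAr coefZ !coefMXn.
    by case: ltnP => _; rewrite ?mulr0 ?coef0 ?mulr0 // coef_map /= coefMC.
  rewrite sC big_ord_recr /= big1 ?add0r => [|j _]; last first.
    by rewrite nth_default ?mul0r // size_ypow_coef ltn_ord.
  have -> : (ypow_coef J)`_J = 1.
    by rewrite -(lead_coef_ypow_coef J) lead_coefE size_ypow_coef.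
  by rewrite mul1r => /esym.
have : C`_J * 'X^(J * N.-1) = 0 by apply/polyP => s; rewrite lead0 coef0.
move/eqP; rewrite mulf_eq0 expf_eq0 polyX_eq0 andbF orbF -lead_coefE lead_coef_eq0.
by rewrite nzC.
Qed.

Hypothesis char0 : [pchar F] =i pred0.
Hypothesis HA : is_AN N x y.

Lemma represents_uniq a U V : represents a U -> represents a V -> U = V.
Proof.
move=> aU aV; apply: (skew_mx_inj char0) => n.
have [[f [fx fy]] _] := HA.2 _ _ _ (AN_rel_skew_mx n).
by rewrite -(aU n f fx fy) -(aV n f fx fy).
Qed.

Lemma represents_surj a : exists U, represents a U.
Proof. by have [C ->] := pbw_surj HA a; exists (skew_pbw C); apply: represents_pbw. Qed.

Lemma represents_eq0 a : represents a 0 -> a = 0.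
Proof.
have [C ->] := pbw_surj HA a => C0.
by rewrite (skew_pbw_eq0 (represents_uniq (represents_pbw C) C0)) pbw0.
Qed.

Lemma represents_inj a b U : represents a U -> represents b U -> a = b.
Proof.
move=> aU bU; apply/eqP; rewrite -subr_eq0; apply/eqP/represents_eq0.
by rewrite -(subrr U); apply: representsB.
Qed.

End SkewRepresentation.

Section NormalElements.
Variable R : nzRingType.

Lemma normal_elt1 : normal_elt (1 : R).
Proof. by split=> a; exists a; rewrite mulr1 mul1r. Qed.

Lemma normal_eltM (u v : R) : normal_elt u -> normal_elt v -> normal_elt (u * v).
Proof.
move=> [uL uR] [vL vR]; split=> a.
  by have [b vab] := vL a; have [c ubc] := uL b; exists c; rewrite -mulrA vab mulrA ubc mulrA.
by have [b aub] := uR a; have [c bvc] := vR b; exists c; rewrite mulrA aub -mulrA bvc mulrA.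
Qed.

Lemma normal_eltX (u : R) i : normal_elt u -> normal_elt (u ^+ i).
Proof.
move=> nu; elim: i => [|i IH]; first by rewrite expr0; apply: normal_elt1.
by rewrite exprS; apply: normal_eltM.
Qed.

End NormalElements.

Lemma normal_eltZ (F : fieldType) (A : algType F) (c : F) (u : A) :
  normal_elt u -> normal_elt (c *: u).
Proof.
move=> [uL uR]; split=> a.
  by have [b uab] := uL a; exists b; rewrite -scalerAl uab scalerAr.
by have [b aub] := uR a; exists b; rewrite -scalerAr aub scalerAl.
Qed.

Section NormalizerSubspaces.
Variables (F : fieldType) (A : algType F) (u : A).

Program Definition lconj_usub : unital_subspace A :=
  @UnitalSubspace F A (fun a => exists b, u * a = b * u) _ _ _.
Next Obligation. by hnf; exists 1; rewrite mulr1 mul1r. Qed.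
Next Obligation.
by move=> a1 a2 [b1 e1] [b2 e2]; exists (b1 + b2); rewrite mulrDr mulrDl e1 e2.
Qed.
Next Obligation. by move=> c a [b e]; exists (c *: b); rewrite -scalerAr e scalerAl. Qed.

Program Definition rconj_usub : unital_subspace A :=
  @UnitalSubspace F A (fun a => exists b, a * u = u * b) _ _ _.
Next Obligation. by hnf; exists 1; rewrite mulr1 mul1r. Qed.
Next Obligation.
by move=> a1 a2 [b1 e1] [b2 e2]; exists (b1 + b2); rewrite mulrDl mulrDr e1 e2.
Qed.
Next Obligation. by move=> c a [b e]; exists (c *: b); rewrite -scalerAl e scalerAr. Qed.

End NormalizerSubspaces.

Section NormalElementsAN.
Variables (F : fieldType) (N : nat) (A : algType F) (x y : A).
Hypotheses (char0 : [pchar F] =i pred0) (N_gt0 : (0 < N)%N) (HA : is_AN N x y).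

Lemma normal_elt_x : normal_elt x.
Proof.
have yx := AN_comm HA.1.
have xy : x * y = (y - x ^+ N.-1) * x by rewrite mulrBl -exprSr prednK // yx addrK.
have yx' : y * x = x * (y + x ^+ N.-1) by rewrite mulrDr -exprS prednK.
split; [apply: (is_AN_usub_full (W := lconj_usub x) HA)
      | apply: (is_AN_usub_full (W := rconj_usub x) HA)].
- by move=> v [b xvb]; exists (x * b); rewrite xvb mulrA.
- by move=> v [b xvb]; exists ((y - x ^+ N.-1) * b); rewrite mulrA xy -mulrA xvb mulrA.
- by move=> v [b vxb]; exists (x * b); rewrite -mulrA vxb.
- by move=> v [b vxb]; exists ((y + x ^+ N.-1) * b); rewrite -mulrA vxb mulrA yx' mulrA.
Qed.

Lemma normal_elt_monomial (lam : F) i : normal_elt (lam *: x ^+ i).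
Proof. exact/normal_eltZ/normal_eltX/normal_elt_x. Qed.

Lemma monomial_neq0 (lam : F) i : lam != 0 -> lam *: x ^+ i != 0.
Proof.
move=> lam0; apply/eqP => xi0.
have xi_rep : represents N x y 0 (lam%:P *: 'X^i) by rewrite -xi0; apply: represents_monomial.
have := represents_uniq N_gt0 char0 HA xi_rep (@represents0 _ N _ x y).
move/(congr1 (fun W : {poly {poly F}} => W`_i)); rewrite coefZ coefXn eqxx mulr1 coef0.
by move/eqP; rewrite polyC_eq0 (negPf lam0).
Qed.

Lemma represents_lconj u U a V : represents N x y u U -> represents N x y a V ->
  (exists b, u * a = b * u) -> exists B, skew_mul U V = skew_mul B U.
Proof.
move=> uU aV [b uab]; have [B bB] := represents_surj HA b.
exists B; apply: (represents_uniq N_gt0 char0 HA (representsM uU aV)).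
by rewrite uab; apply: representsM.
Qed.

Lemma normal_elt_is_monomial u : u != 0 -> normal_elt u ->
  exists (lam : F) (i : nat), lam != 0 /\ u = lam *: x ^+ i.
Proof.
move=> u0 [uL _]; have [U uU] := represents_surj HA u.
have U0 : U != 0.
  by apply: contra u0 => /eqP U0; rewrite U0 in uU; rewrite (represents_eq0 N_gt0 char0 HA uU).
have [B UX] := represents_lconj uU (@represents_x _ N _ x y) (uL x).
have [B' Uty] := represents_lconj uU (@represents_y _ N _ x y) (uL y).
have [lam [i [lam0 EU]]] :=
  skew_commute_tXn_monomial char0 U0 (skew_commute_X_const char0 U0 UX) Uty.
exists lam, i; split => //; apply: (represents_inj N_gt0 char0 HA uU).
by rewrite EU; apply: represents_monomial.
Qed.

End NormalElementsAN.

Theorem lemma2p1 (F : fieldType) (N : nat) (A : algType F) (x y : A) :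
  [pchar F] =i pred0 -> (1 <= N)%N -> is_AN N x y ->
  forall u : A,
    (u != 0 /\ normal_elt u) <->
    (exists (lam : F) (i : nat), lam != 0 /\ u = lam *: x ^+ i).
Proof.
move=> char0 N_gt0 HA u; split=> [[u0 nu]|[lam [i [lam0 ->]]]].
  exact: (normal_elt_is_monomial char0 N_gt0 HA u0 nu).
split; first exact: (monomial_neq0 char0 N_gt0 HA).
exact: (normal_elt_monomial N_gt0 HA).
Qed.
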